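(* Let $\delta\in(0,1)$, let $X\subset\mathbb{R}_+$ be a Borel set with $0\in X$, and let $x_0>0$. Consider the set of binary environments $\mathcal B_X=\{F_{(z,\sigma)}: z\in X,\ \sigma\in[0,1]\}$. Let $\underline q^*=\frac{1-\delta}{2-\delta}$ and let $\bar q$ be the stationary decision rule with constant stopping probability $\underline q^*$ (it stops with probability $\underline q^*$ after every history in which all alternatives $x_1,\dots,x_t$ equal $0$, and stops with probability $1$ after any history containing a nonzero alternative). Then: (a) $\bar q$ attains the performance ratio $1/2$, i.e. $R_{\bar q}(x_0,\mathcal B_X)=1/2$; (b) if $\sup X=\infty$, then $\bar q$ is dynamically robust for $(x_0,\mathcal B_X)$, i.e. $R_{\bar q}(x_0,\mathcal B_X)=R^*(x_0,\mathcal B_X)$.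
   Context: Sequential search model. Fix a discount factor $\delta\in(0,1)$, a Borel set $X\subset\mathbb{R}_+$ with $0\in X$, and an outside option $x_0>0$. Let $\mathcal F_X$ be the set of Borel probability distributions on $X$ with finite mean (''environments''); a set of feasible environments is any $\mathcal F\subset\mathcal F_X$. A history is $h_t=(x_0,x_1,\dots,x_t)$, $t\ge 0$, $x_i\in X$; its best-so-far alternative is $y_t=\max\{x_0,\dots,x_t\}$; $\mathcal H(x_0)$ is the set of all such histories. A decision rule $p$ assigns to each history $h$ a stopping probability $p(h)\in[0,1]$. Given an environment $F$ and a history $h_t$, the future alternatives $x_{t+1},x_{t+2},\dots$ are i.i.d. with law $F$; at each round $s\ge t$ the individual stops with probability $p(h_s)$ (otherwise she observes the next alternative), and stopping at round $s$ yields $\delta^{s-t}y_s$ (never stopping yields $0$). $U_p(F,h_t)$ is the expected payoff; equivalently $U_p(F,h_t)=p(h_t)y_t+(1-p(h_t))\delta\int U_p(F,(x_0,\dots,x_t,x))\,dF(x)$. $V(F,h)=\sup_p U_p(F,h)$. A prior (mixed environment) is a finitely supported probability distribution $\mu$ on $\mathcal F$; $\Delta(\mathcal F)$ is the set of priors, and each $F\in\mathcal F$ is identified with the prior putting mass one on it. An environment or prior is consistent with $h_t$ if the sequence $x_1,\dots,x_t$ occurs with positive probability under it; $\mathcal F(h)$, $\Delta(\mathcal F(h))$ denote the consistent environments and priors. For $\mu$ consistent with $h$, $U_p(\mu,h)=\sum_F\mu(F\mid h)U_p(F,h)$ with $\mu(\cdot\mid h)$ the Bayesian posterior, and $V(\mu,h)=\sup_pU_p(\mu,h)$.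 The performance ratio is $R_p(x_0,\mathcal F)=\inf_{h\in\mathcal H(x_0)}\inf_{\mu\in\Delta(\mathcal F(h))}U_p(\mu,h)/V(\mu,h)$, the dynamically robust ratio is $R^*(x_0,\mathcal F)=\sup_pR_p(x_0,\mathcal F)$ (supremum over all decision rules), and $p$ is dynamically robust if $R_p(x_0,\mathcal F)=R^*(x_0,\mathcal F)$. A binary environment $F_{(z,\sigma)}$ is the lottery giving value $0$ with probability $1-\sigma$ and value $z$ with probability $\sigma$. *)

From HB Require Import structures.
From mathcomp Require Import all_boot all_order all_algebra.
From mathcomp Require Import all_classical all_reals all_analysis.
Set Implicit Arguments. Unset Strict Implicit. Unset Printing Implicit Defensive.
Import Order.TTheory GRing.Theory Num.Theory.
Local Open Scope classical_set_scope.
Local Open Scope ring_scope.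

Section SearchModel.
Variable R : realType.

(* A history h_t = (x_0, x_1, ..., x_t) is represented as the pair
   (x_0, [:: x_1; ...; x_t]). *)
Definition history := (R * seq R)%type.

Definition best (h : history) : R := foldr Num.max h.1 h.2.

Definition hext (h : history) (x : R) : history := (h.1, rcons h.2 x).

Definition in_hist (X : set R) (x0 : R) (h : history) : Prop :=
  h.1 = x0 /\ (forall x, x \in h.2 -> X x).

(* A (finitely supported) environment: a lottery given as a list of
   (value, probability) pairs. *)
Definition env := seq (R * R).

Definition binary_env (z sigma : R) : env := [:: (0, 1 - sigma); (z, sigma)].

Definition BX (X : set R) : set env :=
  [set F | exists z sigma, X z /\ 0 <= sigma <= 1 /\ F = binary_env z sigma].

Definition pmass (F : env) (x : R) : R := \sum_(vw <- F | vw.1 == x) vw.2.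

Definition lik (F : env) (h : history) : R := \prod_(x <- h.2) pmass F x.

Definition rule := history -> R.
Definition is_rule (p : rule) : Prop := forall h, 0 <= p h <= 1.

(* stop_term p F n h = E[ (prob. of continuing at rounds t..t+n-1 and
   stopping at round t+n) * y_{t+n} ] given history h_t and environment F. *)
Fixpoint stop_term (p : rule) (F : env) (n : nat) (h : history) : R :=
  match n with
  | 0 => p h * best h
  | n'.+1 => (1 - p h) * \sum_(vw <- F) vw.2 * stop_term p F n' (hext h vw.1)
  end.

(* expected payoff U_p(F,h) = sum_n delta^n * stop_term (never stopping yields 0) *)
Definition Upay (delta : R) (p : rule) (F : env) (h : history) : R :=
  limn (fun N => \sum_(0 <= n < N) delta ^+ n * stop_term p F n h).

(* A prior: finitely supported distribution on environments, as a list of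
   (weight, environment). *)
Definition prior := seq (R * env).

(* mu is in Delta(F(h)) : a probability on Fset whose support consists of
   environments consistent with h. *)
Definition prior_on (Fset : set env) (h : history) (mu : prior) : Prop :=
  (forall e, e \in mu -> [/\ 0 <= e.1, Fset e.2 & 0 < e.1 -> 0 < lik e.2 h])
  /\ \sum_(e <- mu) e.1 = 1.

(* U_p(mu,h) = sum_F mu(F|h) U_p(F,h) with the Bayesian posterior *)
Definition Uprior (delta : R) (p : rule) (mu : prior) (h : history) : R :=
  \sum_(e <- mu)
     (e.1 * lik e.2 h / \sum_(e' <- mu) e'.1 * lik e'.2 h) * Upay delta p e.2 h.

Definition Vprior (delta : R) (mu : prior) (h : history) : R :=
  sup [set Uprior delta p mu h | p in is_rule].

Definition perf_ratio (delta : R) (X : set R) (x0 : R) (Fset : set env)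
    (p : rule) : R :=
  inf [set Uprior delta p hm.2 hm.1 / Vprior delta hm.2 hm.1
        | hm in [set hm : history * prior |
                  in_hist X x0 hm.1 /\ prior_on Fset hm.1 hm.2]].

Definition robust_ratio (delta : R) (X : set R) (x0 : R) (Fset : set env) : R :=
  sup [set perf_ratio delta X x0 Fset p | p in is_rule].

Definition dyn_robust (delta : R) (X : set R) (x0 : R) (Fset : set env)
    (p : rule) : Prop :=
  perf_ratio delta X x0 Fset p = robust_ratio delta X x0 Fset.

Definition qstar (delta : R) : R := (1 - delta) / (2 - delta).
Definition qbar (delta : R) : rule :=
  fun h => if all (fun x => x == 0) h.2 then qstar delta else 1.

End SearchModel.

From HB Require Import structures.
From mathcomp Require Import all_boot all_order all_algebra.
From mathcomp Require Import all_classical all_reals all_analysis.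
From mathcomp Require Import ring lra.
Set Implicit Arguments. Unset Strict Implicit. Unset Printing Implicit Defensive.
Import Order.TTheory GRing.Theory Num.Theory.
Local Open Scope classical_set_scope.
Local Open Scope ring_scope.

(** Half-optimality of [qbar]: along histories made of zeros only, the payoff
    L of [qbar] in a binary environment F_(z,s) has a closed form, and 2 L is a
    supersolution of the one-step inequality that bounds the payoff of every
    decision rule; once a nonzero alternative has appeared, [qbar] stops with the
    best possible value. Hence U_p <= 2 U_qbar environment by environment, so
    V <= 2 U_qbar under every prior. The point mass at 0, where [qbar] earns
    x0 / 2 and stopping earns x0, shows that the ratio is exactly 1/2.

    Compare, along the all-zero
    histories, the point mass at 0 with F_(z,s), and normalise the payoffs of a
    rule p by x0 and by the payoff G of waiting for z. Their sum u_t satisfies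
    u_t <= P_t (1 + x0 / G) + (1 - P_t) (d u_(t+1) + 1 - d + d s), where P_t is
    the stopping probability of p, so a bounded u stays below
    max (1 + x0 / G) (1 + d s / (1 - d)); but u_0 >= 2 R_p. Letting s -> 0 and
    z -> oo gives R_p <= 1/2. *)

Local Notation all0 s := (all (fun x => x == 0) s).

Lemma open_unit_le (R : numDomainType) (x : R) : 0 < x < 1 -> 0 <= x <= 1.
Proof. by case/andP=> x0 x1; rewrite !ltW. Qed.

Section Histories.
Variable R : realType.
Implicit Types (h : history R) (F : env R).

Lemma best_hext h x : best (hext h x) = Num.max (best h) x.
Proof.
case: h => a s; rewrite /best /hext /=; elim: s => [|y s IH] /=; first by rewrite maxC.
by rewrite IH maxA.
Qed.

Lemma best_hext_ge0 h x : 0 <= best h -> 0 <= best (hext h x).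
Proof. by move=> bh; rewrite best_hext le_max bh. Qed.

Lemma best_ge_head h : h.1 <= best h.
Proof. by case: h => a s; rewrite /best /=; elim: s => //= y s IH; rewrite le_max IH orbT. Qed.

Lemma best_ge_mem h x : x \in h.2 -> x <= best h.
Proof.
case: h => a s; rewrite /best /=; elim: s => //= y s IH.
by rewrite inE le_max => /orP [/eqP ->|/IH ->]; rewrite ?lexx ?orbT.
Qed.

Lemma pmass_neq0_lik_gt0 F h x : x \in h.2 -> 0 < lik F h -> pmass F x != 0.
Proof.
move=> xh; rewrite /lik (big_rem x xh) /=; apply: contraTneq => ->.
by rewrite mul0r ltxx.
Qed.

Definition zero_hist (x0 : R) (t : nat) : history R :=
  iter t (fun h => hext h 0) (x0, [::]).

Lemma zero_histS x0 t : zero_hist x0 t.+1 = hext (zero_hist x0 t) 0.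
Proof. by []. Qed.

Lemma best_zero_hist x0 t : 0 <= x0 -> best (zero_hist x0 t) = x0.
Proof.
by move=> x0_ge0; elim: t => [|t IH] //; rewrite zero_histS best_hext IH; apply/max_idPl.
Qed.

End Histories.

Section PartialPayoff.
Variables (R : realType) (d : R) (p : rule R).
Implicit Types (h : history R) (F : env R).

Definition Upay_upto F N h := \sum_(0 <= n < N) d ^+ n * stop_term p F n h.

Lemma Upay_limn F h : Upay d p F h = limn (Upay_upto F ^~ h).
Proof. by []. Qed.

Lemma Upay_upto0 F h : Upay_upto F 0 h = 0.
Proof. by rewrite /Upay_upto big_geq. Qed.

Lemma Upay_uptoS F N h : Upay_upto F N.+1 h =
  p h * best h + (1 - p h) * d * \sum_(vw <- F) vw.2 * Upay_upto F N (hext h vw.1).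
Proof.
rewrite /Upay_upto big_nat_recl //= expr0 mul1r; congr (_ + _).
under [X in _ = _ * X]eq_bigr => vw _ do rewrite big_distrr /=.
rewrite exchange_big big_distrr /=; apply: eq_bigr => n _.
rewrite !big_distrr /=; apply: eq_bigr => vw _; rewrite exprS; ring.
Qed.

Lemma Upay_uptoS_stop F N h : p h = 1 -> Upay_upto F N.+1 h = best h.
Proof. by move=> ph1; rewrite Upay_uptoS ph1 subrr !mul0r mul1r addr0. Qed.

Lemma Upay_uptoS_binary z s N h : Upay_upto (binary_env z s) N.+1 h =
  p h * best h + (1 - p h) * d * ((1 - s) * Upay_upto (binary_env z s) N (hext h 0)
     + s * Upay_upto (binary_env z s) N (hext h z)).
Proof. by rewrite Upay_uptoS /binary_env !big_cons big_nil addr0. Qed.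

End PartialPayoff.

Section BinaryPayoff.
Variables (R : realType) (d z s : R) (p : rule R).
Hypotheses (p_rule : is_rule p) (s01 : 0 <= s <= 1) (d01 : 0 <= d <= 1) (z_ge0 : 0 <= z).
Implicit Types (h : history R).
Local Notation F := (binary_env z s).
Local Notation U := (Upay d p F).
Local Notation Uupto := (Upay_upto d p F).

Lemma stop_term_binary_ge0 n h : 0 <= best h -> 0 <= stop_term p F n h.
Proof.
elim: n h => [|n IH] h bh /=; have /andP [p0 p1] := p_rule h.
  exact: mulr_ge0.
have /andP [s0 s1] := s01.
rewrite /binary_env !big_cons big_nil addr0.
by rewrite mulr_ge0 ?subr_ge0 // addr_ge0 // mulr_ge0 ?subr_ge0 // IH // best_hext_ge0.
Qed.

Lemma Upay_upto_nondecreasing h : 0 <= best h -> nondecreasing_seq (Uupto ^~ h).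
Proof.
move=> bh; apply/nondecreasing_seqP => N; rewrite /Upay_upto big_nat_recr //= lerDl.
by rewrite mulr_ge0 ?exprn_ge0 ?stop_term_binary_ge0 //; case/andP: d01.
Qed.

Lemma Upay_upto_le M N h : z <= M -> 0 <= best h <= M -> Uupto N h <= M.
Proof.
move=> zM; elim: N h => [|N IH] h /andP [b0 bM]; first by rewrite Upay_upto0 (le_trans b0).
have M0 : 0 <= M := le_trans b0 bM.
have UM x : 0 <= x <= M -> Uupto N (hext h x) <= M.
  by case/andP=> x0 xM; apply: IH; rewrite best_hext le_max b0 ge_max bM.
have U0 : Uupto N (hext h 0) <= M by rewrite UM ?lexx.
have Uz : Uupto N (hext h z) <= M by rewrite UM ?z_ge0.
rewrite Upay_uptoS_binary.
have /andP [p0 p1] := p_rule h; have /andP [s0 s1] := s01; have /andP [d0 d1] := d01.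
set C := (1 - s) * _ + s * _.
have CM : C <= M by rewrite /C; nra.
have dCM : d * C <= M by nra.
rewrite -mulrA; nra.
Qed.

Lemma Upay_upto_le_supersolution y w V N h :
    0 <= y <= w -> z <= w -> y <= V -> d * ((1 - s) * V + s * w) <= V ->
  0 <= best h <= y -> Uupto N h <= V.
Proof.
move=> /andP [y0 yw] zw yV dV; elim: N h => [|N IH] h /andP [b0 by_].
  by rewrite Upay_upto0 (le_trans y0).
have U0 : Uupto N (hext h 0) <= V.
  by apply: IH; rewrite best_hext le_max b0 ge_max by_ y0.
have Uz : Uupto N (hext h z) <= w.
  by apply: Upay_upto_le; rewrite // best_hext le_max b0 ge_max zw (le_trans by_).
rewrite Upay_uptoS_binary.
have /andP [p0 p1] := p_rule h; have /andP [s0 s1] := s01; have /andP [d0 d1] := d01.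
set C := (1 - s) * _ + s * _.
have CV : C <= (1 - s) * V + s * w by rewrite /C; nra.
have dCV : d * C <= V by nra.
rewrite -mulrA; nra.
Qed.

Lemma Upay_upto_cvg h : 0 <= best h -> cvgn (Uupto ^~ h).
Proof.
move=> bh; apply: nondecreasing_is_cvgn; first exact: Upay_upto_nondecreasing.
exists (Num.max (best h) z) => _ [N _ <-].
by apply: Upay_upto_le; rewrite ?le_max ?lexx ?orbT ?bh.
Qed.

Lemma Upay_upto_le_Upay N h : 0 <= best h -> Uupto N h <= U h.
Proof.
by move=> bh; exact: (nondecreasing_cvgn_le (Upay_upto_nondecreasing bh) (Upay_upto_cvg bh)).
Qed.

Lemma Upay_ge0 h : 0 <= best h -> 0 <= U h.
Proof. by move=> bh; rewrite (le_trans _ (Upay_upto_le_Upay 0 bh)) ?Upay_upto0. Qed.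

Lemma Upay_le_ub V h : 0 <= best h -> (forall N, Uupto N h <= V) -> U h <= V.
Proof. by move=> bh UV; apply: limr_le; [exact: Upay_upto_cvg | exact: nearW]. Qed.

Lemma Upay_le M h : z <= M -> 0 <= best h <= M -> U h <= M.
Proof. by move=> zM /andP [b0 bM]; apply: Upay_le_ub => // N; rewrite Upay_upto_le ?b0. Qed.

Lemma Upay_le_supersolution y w V h :
    0 <= y <= w -> z <= w -> y <= V -> d * ((1 - s) * V + s * w) <= V ->
  0 <= best h <= y -> U h <= V.
Proof.
move=> yw zw yV dV bh; have /andP [b0 _] := bh.
apply: Upay_le_ub => // N.
exact: Upay_upto_le_supersolution yw zw yV dV bh.
Qed.

Lemma Upay_binaryE h : 0 <= best h ->
  U h = p h * best h + (1 - p h) * d * ((1 - s) * U (hext h 0) + s * U (hext h z)).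
Proof.
move=> bh; have c0 := Upay_upto_cvg (best_hext_ge0 0 bh).
have cz := Upay_upto_cvg (best_hext_ge0 z bh).
have lim_shift := Upay_upto_cvg bh; rewrite -cvg_shiftS in lim_shift.
apply: (cvg_unique _ lim_shift) => /=; first exact: norm_hausdorff.
under eq_fun do rewrite Upay_uptoS_binary.
by apply: cvgD; [exact: cvg_cst | apply: cvgMl_tmp; apply: cvgD; exact: cvgMl_tmp].
Qed.

Lemma Upay_stop h : 0 <= best h -> p h = 1 -> U h = best h.
Proof. by move=> bh ph1; rewrite Upay_binaryE // ph1 subrr !mul0r mul1r addr0. Qed.

End BinaryPayoff.

Definition stationary (R : realType) (q : R) : rule R :=
  fun h => if all0 h.2 then q else 1.

Lemma qbarE (R : realType) (d : R) : qbar d = stationary (qstar d).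
Proof. by []. Qed.

Lemma stationary_rule (R : realType) (q : R) : 0 <= q <= 1 -> is_rule (stationary q).
Proof. by move=> q01 h; rewrite /stationary; case: ifP; rewrite ?ler01 ?lexx. Qed.

Lemma stationary_stop (R : realType) (q : R) h x : x != 0 -> stationary q (hext h x) = 1.
Proof. by move=> x0; rewrite /stationary /hext /= all_rcons (negPf x0). Qed.

Section StationaryPayoff.
Variables (R : realType) (d z s : R).
Hypotheses (s01 : 0 <= s <= 1) (d01 : 0 <= d <= 1) (z_ge0 : 0 <= z).
Implicit Types (h : history R).
Local Notation F := (binary_env z s).
Local Notation Uq q h := (Upay d (stationary q) (binary_env z s) h).

Lemma Upay_upto_stationary_best q N h h' : all0 h.2 -> all0 h'.2 ->
  best h = best h' -> Upay_upto d (stationary q) F N h = Upay_upto d (stationary q) F N h'.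
Proof.
elim: N h h' => [|N IH] h h' h0 h'0 bhh'; first by rewrite !Upay_upto0.
have IH0 : Upay_upto d (stationary q) F N (hext h 0) =
           Upay_upto d (stationary q) F N (hext h' 0).
  by apply: IH; rewrite ?all_rcons ?eqxx // !best_hext bhh'.
have qh : stationary q h = stationary q h' by rewrite /stationary h0 h'0.
rewrite !Upay_uptoS_binary qh bhh' IH0.
have [z0|z0] := eqVneq z 0; first by rewrite [in hext h z]z0 [in hext h' z]z0 IH0.
case: N {IH IH0} => [|N]; first by rewrite !Upay_upto0.
rewrite (Upay_uptoS_stop _ _ _ (stationary_stop q h z0)).
by rewrite (Upay_uptoS_stop _ _ _ (stationary_stop q h' z0)) !best_hext bhh'.
Qed.

Lemma Upay_stationary_best q h h' : all0 h.2 -> all0 h'.2 ->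
  best h = best h' -> Uq q h = Uq q h'.
Proof.
move=> h0 h'0 bhh'; rewrite !Upay_limn.
by under eq_fun do rewrite (Upay_upto_stationary_best _ _ h0 h'0 bhh').
Qed.

Lemma Upay_stationaryE q h : 0 <= q <= 1 -> all0 h.2 -> 0 <= best h ->
  Uq q h = q * best h + (1 - q) * d *
             ((1 - s) * Uq q h + s * (if z == 0 then Uq q h else Num.max (best h) z)).
Proof.
move=> q01 h0 bh; have q_rule := stationary_rule q01; set L := Uq q h.
have L0 : Uq q (hext h 0) = L.
  by apply: Upay_stationary_best; rewrite ?all_rcons ?eqxx // best_hext; apply/max_idPl.
have qh : stationary q h = q by rewrite /stationary h0.
rewrite {1}/L Upay_binaryE // L0 qh.
have [z0|z0] := eqVneq z 0; first by rewrite [in hext h z]z0 L0.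
by rewrite Upay_stop ?best_hext ?stationary_stop // le_max bh.
Qed.

Lemma Upay_stationary_nonzero q h : 0 <= q <= 1 -> 0 < z -> all0 h.2 -> 0 <= best h ->
  (1 - (1 - q) * d * (1 - s)) * Uq q h = q * best h + (1 - q) * d * s * Num.max (best h) z.
Proof.
move=> q01 z0 h0 bh; have := Upay_stationaryE q01 h0 bh.
by rewrite gt_eqF //= => EL; lra.
Qed.

End StationaryPayoff.

Section ClosedForms.
Variables (R : realType) (d : R).
Hypothesis d01 : 0 < d < 1.
Implicit Types (h : history R).

Lemma qstar01 : 0 <= qstar d <= 1.
Proof.
have /andP [d0 d1] := d01; rewrite /qstar divr_ge0 ?ler_pdivrMr /=; lra.
Qed.

Lemma qbar_rule : is_rule (qbar d).
Proof. exact: stationary_rule qstar01. Qed.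

Let d01' := open_unit_le d01.

Lemma Upay_qbar_point0 s h : 0 <= s <= 1 -> all0 h.2 -> 0 <= best h ->
  Upay d (qbar d) (binary_env 0 s) h = best h / 2.
Proof.
move=> s01 h0 bh; have := Upay_stationaryE s01 d01' (lexx 0) qstar01 h0 bh.
rewrite eqxx -qbarE /qstar; set L := Upay _ _ _ _ => EL.
have /andP [d0 d1] := d01.
have E : (2 - d) * L = (1 - d) * best h + d * L by rewrite {1}EL; field; lra.
nra.
Qed.

Lemma Upay_qbar_nonzero z s h : 0 <= s <= 1 -> 0 < z -> all0 h.2 -> 0 <= best h ->
  (2 - 2 * d + d * s) * Upay d (qbar d) (binary_env z s) h =
    (1 - d) * best h + d * s * Num.max (best h) z.
Proof.
move=> s01 z0 h0 bh; have := Upay_stationary_nonzero s01 d01' (ltW z0) qstar01 z0 h0 bh.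
rewrite -qbarE; set q := qstar d; set L := Upay _ _ _ _ => EL.
have /andP [d0 d1] := d01; have d2 : 2 - d != 0 by rewrite gt_eqF //; lra.
have -> : 2 - 2 * d + d * s = (2 - d) * (1 - (1 - q) * d * (1 - s)) by rewrite /q /qstar; field.
have -> : (1 - d) * best h + d * s * Num.max (best h) z =
    (2 - d) * (q * best h + (1 - q) * d * s * Num.max (best h) z) by rewrite /q /qstar; field.
by rewrite -mulrA EL.
Qed.

Definition wait_value (s z : R) := d * s * z / (1 - d + d * s).

Lemma Upay_wait z s h : 0 <= s <= 1 -> 0 < z -> all0 h.2 -> 0 <= best h <= z ->
  Upay d (stationary 0) (binary_env z s) h = wait_value s z.
Proof.
move=> s01 z0 h0 /andP [b0 bz]; have /andP [d0 d1] := d01; have /andP [s0 s1] := s01.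
have q01 : 0 <= (0 : R) <= 1 by rewrite lexx ler01.
have := Upay_stationary_nonzero s01 d01' (ltW z0) q01 z0 h0 b0.
rewrite (max_idPr bz) mul0r add0r subr0 !mul1r => E.
have c0 : 1 - d + d * s != 0 by rewrite gt_eqF //; nra.
apply: (mulfI c0); rewrite /wait_value [_ * (_ / _)]mulrC divfK // -E; ring.
Qed.

End ClosedForms.

Section HalfOptimality.
Variables (R : realType) (d z s : R) (p : rule R).
Hypotheses (d01 : 0 < d < 1) (s01 : 0 <= s <= 1) (z_ge0 : 0 <= z) (p_rule : is_rule p).
Implicit Types (h : history R).
Local Notation F := (binary_env z s).

Let d01' := open_unit_le d01.

Lemma Upay_le_Upay_qbar_after_nonzero h : 0 <= best h -> 0 < lik F h -> ~~ all0 h.2 ->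
  Upay d p F h <= Upay d (qbar d) F h.
Proof.
move=> bh hF /allPn [x xh /= x0].
have zx : z = x.
  apply/eqP; apply: contraTT (pmass_neq0_lik_gt0 xh hF) => zx.
  by rewrite /pmass /binary_env !big_cons big_nil /= [0 == x]eq_sym (negPf x0) (negPf zx) eqxx.
rewrite (Upay_stop (qbar_rule d01)) //; last first.
  by rewrite /qbar (negPf (introN allP _)) // => /(_ x xh); apply/negP.
by apply: Upay_le; rewrite ?bh ?lexx // zx best_ge_mem.
Qed.

Lemma Upay_le_2Upay_qbar h : 0 < best h -> 0 < lik F h ->
  Upay d p F h <= 2 * Upay d (qbar d) F h.
Proof.
move=> bh hF; have bh' := ltW bh.
have L0 := Upay_ge0 (qbar_rule d01) s01 d01' z_ge0 bh'.
have [h0|/(Upay_le_Upay_qbar_after_nonzero bh' hF)] := boolP (all0 h.2); last by lra.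
have [/eqP z0|z0] := boolP (z == 0).
  rewrite z0 Upay_qbar_point0 //.
  by rewrite mulrC divfK ?pnatr_eq0 //; apply: Upay_le; rewrite ?lexx ?bh'.
have zpos : 0 < z by rewrite lt0r z0.
have := Upay_qbar_nonzero d01 s01 zpos h0 bh'.
set L := Upay _ _ _ _; set y := best h; set w := Num.max y z => EL.
have yw : y <= w by rewrite le_max lexx.
have zw : z <= w by rewrite le_max lexx orbT.
have /andP [d0 d1] := d01; have /andP [s0 s1] := s01.
have c0 : 0 < 2 - 2 * d + d * s by nra.
(* 2 L is a supersolution: by [EL] both conditions become sign conditions. *)
apply: (Upay_le_supersolution p_rule s01 d01' z_ge0 (y := y) (w := w)).
- by rewrite bh' yw.
- exact: zw.
- have K : (2 - 2 * d + d * s) * (2 * L - y) = d * s * (2 * w - y) by lra.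
  have : 0 <= d * s * (2 * w - y) by rewrite !mulr_ge0 //; lra.
  nra.
- have K : (2 - 2 * d + d * s) * (2 * L - d * ((1 - s) * (2 * L) + s * w)) =
       2 * (1 - d + d * s) * (1 - d) * y + d * d * s * s * w by nra.
  have : 0 <= 2 * (1 - d + d * s) * (1 - d) * y + d * d * s * s * w.
    by rewrite addr_ge0 ?mulr_ge0 //; nra.
  nra.
- by rewrite bh' lexx.
Qed.

End HalfOptimality.

Section Posterior.
Variables (R : realType) (d : R) (mu : prior R) (h : history R).
Hypothesis weight_ge0 : forall e, e \in mu -> 0 <= e.1 * lik e.2 h.
Implicit Types (p : rule R).
Local Notation norm := (\sum_(e <- mu) e.1 * lik e.2 h).

Lemma posterior_ge0 e : e \in mu -> 0 <= e.1 * lik e.2 h / norm.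
Proof.
by move=> emu; rewrite divr_ge0 ?weight_ge0 // big_seq sumr_ge0.
Qed.

Lemma ler_Uprior k p p' :
    (forall e, e \in mu -> 0 < e.1 * lik e.2 h -> Upay d p e.2 h <= k * Upay d p' e.2 h) ->
  Uprior d p mu h <= k * Uprior d p' mu h.
Proof.
move=> le_pp'; rewrite /Uprior mulr_sumr; set D := norm.
rewrite !big_seq; apply: ler_sum => e emu.
have [w0|w_gt0] := eqVneq (e.1 * lik e.2 h) 0; first by rewrite w0 !mul0r mulr0.
by rewrite mulrCA ler_wpM2l ?posterior_ge0 // le_pp' // lt_def w_gt0 weight_ge0.
Qed.

Lemma Uprior_ge0 p : (forall e, e \in mu -> 0 <= Upay d p e.2 h) -> 0 <= Uprior d p mu h.
Proof.
move=> U0; rewrite /Uprior; set D := norm.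
by rewrite big_seq sumr_ge0 // => e emu; rewrite mulr_ge0 ?posterior_ge0 ?U0.
Qed.

Lemma Uprior_const p c : norm != 0 -> (forall e, e \in mu -> Upay d p e.2 h = c) ->
  Uprior d p mu h = c.
Proof.
move=> norm0 Uc; rewrite /Uprior; set D := norm; rewrite big_seq.
under eq_bigr => e emu do rewrite Uc //.
by rewrite -big_seq -mulr_suml -mulr_suml divff ?mul1r.
Qed.

End Posterior.

Lemma Uprior_single (R : realType) (d : R) (p : rule R) (F : env R) (h : history R) :
  lik F h != 0 -> Uprior d p [:: (1, F)] h = Upay d p F h.
Proof.
by move=> l0; rewrite /Uprior !big_cons !big_nil /= !addr0 mul1r divff // mul1r.
Qed.

Lemma lik_binary_ge0 (R : realType) (z s : R) (h : history R) :
  0 <= s <= 1 -> 0 <= lik (binary_env z s) h.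
Proof.
case/andP=> s0 s1; rewrite /lik prodr_ge0 // => x _.
by rewrite /pmass /binary_env !big_cons big_nil /=; do 2 case: ifP => _; lra.
Qed.

Lemma prior_on_single (R : realType) (X : set R) (z s : R) (h : history R) :
    X z -> 0 <= s <= 1 -> 0 < lik (binary_env z s) h ->
  prior_on (BX X) h [:: (1, binary_env z s)].
Proof.
move=> Xz s01 lik_gt0; split; last by rewrite big_cons big_nil addr0.
by move=> e; rewrite inE => /eqP -> /=; split; [exact: ler01 | exists z, s |].
Qed.

Section BinaryPriors.
Variables (R : realType) (d : R) (X : set R) (h : history R) (mu : prior R).
Hypotheses (d01 : 0 < d < 1) (X_ge0 : forall x, X x -> 0 <= x)
  (best_gt0 : 0 < best h) (mu_on : prior_on (BX X) h mu).
Implicit Types (p : rule R).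

Let d01' := open_unit_le d01.

Lemma prior_on_BX_mem e : e \in mu ->
  [/\ 0 <= e.1, exists z s, [/\ X z, 0 <= s <= 1 & e.2 = binary_env z s]
   & 0 < e.1 -> 0 < lik e.2 h].
Proof.
by case: mu_on => on_mu _ /on_mu [e0 [z [s [Xz [s01 ->]]]] hl]; split => //; exists z, s.
Qed.

Let weight_ge0 e : e \in mu -> 0 <= e.1 * lik e.2 h.
Proof.
by move=> /prior_on_BX_mem [e0 [z [s [_ s01 ->]]] _]; rewrite mulr_ge0 ?lik_binary_ge0.
Qed.

Lemma prior_norm_gt0 : 0 < \sum_(e <- mu) e.1 * lik e.2 h.
Proof.
have [_ mu1] := mu_on.
have [e emu e_gt0] : exists2 e, e \in mu & 0 < e.1.
  have [/hasP [e emu e_gt0]|/hasPn e_le0] := boolP (has (fun e => 0 < e.1) mu).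
    by exists e.
  move: mu1; rewrite big1_seq => [/esym/eqP|e /andP [_ emu]]; first by rewrite oner_eq0.
  have [e0 _ _] := prior_on_BX_mem emu.
  by apply/eqP; rewrite eq_le e0 andbT leNgt e_le0.
have [_ _ /(_ e_gt0) lik_gt0] := prior_on_BX_mem emu.
rewrite (big_rem e emu) /= ltr_pwDl ?mulr_gt0 //.
by rewrite big_seq sumr_ge0 // => e' /mem_rem /weight_ge0.
Qed.

Lemma Uprior_stationary1 : Uprior d (stationary 1) mu h = best h.
Proof.
apply: Uprior_const; first by rewrite gt_eqF ?prior_norm_gt0.
move=> e /prior_on_BX_mem [_ [z [s [Xz s01 ->]]] _].
have stop_rule : is_rule (stationary (1 : R)) by apply: stationary_rule; rewrite ler01 lexx.
rewrite (Upay_stop stop_rule) //; [exact: X_ge0 | exact: ltW | by rewrite /stationary; case: ifP].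
Qed.

Lemma Uprior_le_2Uprior_qbar p : is_rule p -> Uprior d p mu h <= 2 * Uprior d (qbar d) mu h.
Proof.
move=> p_rule; apply: (ler_Uprior weight_ge0) => e emu.
have [_ [z [s [Xz s01 ->]]] _] := prior_on_BX_mem emu.
move=> w_gt0; apply: Upay_le_2Upay_qbar => //; first exact: X_ge0.
rewrite lt_def lik_binary_ge0 // andbT.
by apply: contraTneq w_gt0 => ->; rewrite mulr0 ltxx.
Qed.

Lemma Uprior_BX_ge0 p : is_rule p -> 0 <= Uprior d p mu h.
Proof.
move=> p_rule; apply: (Uprior_ge0 weight_ge0) => e /prior_on_BX_mem [_ [z [s [Xz s01 ->]]] _].
by apply: Upay_ge0 => //; [exact: X_ge0 | exact: ltW].
Qed.

Let Uprior_bounded : ubound [set Uprior d p mu h | p in @is_rule R] (2 * Uprior d (qbar d) mu h).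
Proof. by move=> _ [p p_rule <-]; exact: Uprior_le_2Uprior_qbar. Qed.

Lemma Vprior_le_2Uprior_qbar : Vprior d mu h <= 2 * Uprior d (qbar d) mu h.
Proof.
apply: ge_sup Uprior_bounded.
by exists (Uprior d (qbar d) mu h), (qbar d) => //; exact: qbar_rule.
Qed.

Lemma Uprior_le_Vprior p : is_rule p -> Uprior d p mu h <= Vprior d mu h.
Proof. by move=> p_rule; apply: ub_le_sup; [exists (2 * Uprior d (qbar d) mu h) | exists p]. Qed.

Lemma best_le_Vprior : best h <= Vprior d mu h.
Proof.
rewrite -Uprior_stationary1; apply/Uprior_le_Vprior/stationary_rule.
by rewrite ler01 lexx.
Qed.

Lemma Vprior_gt0 : 0 < Vprior d mu h.
Proof. exact: lt_le_trans best_le_Vprior. Qed.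

End BinaryPriors.

Lemma bounded_subsolution_le (R : realType) (d a c : R) (P u : nat -> R) :
    0 <= d < 1 -> (forall t, 0 <= P t <= 1) -> (exists M, forall t, u t <= M) ->
    (forall t, u t <= P t * a + (1 - P t) * (d * u t.+1 + c)) ->
  forall t, u t <= Num.max a (c / (1 - d)).
Proof.
(* At the supremum S of u the recursion gives S <= max a (d S + c). *)
move=> /andP [d0 d1] P01 [M uM] u_le; set S := sup (range u).
have u_ub : ubound (range u) M by move=> _ [t _ <-].
have uS t : u t <= S by apply: ub_le_sup; [exists M | exists t].
have S_le : S <= Num.max a (d * S + c).
  apply: ge_sup; first by exists (u 0), 0%N.
  move=> _ [t _ <-]; apply: le_trans (u_le t) _; have /andP [P0 P1] := P01 t.
  set m := Num.max _ _; have am : a <= m by rewrite le_max lexx.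
  have Sm : d * S + c <= m by rewrite le_max lexx orbT.
  have h1 : 0 <= P t * (m - a) by rewrite mulr_ge0 ?subr_ge0.
  have h2 : 0 <= (1 - P t) * (m - (d * u t.+1 + c)).
    by rewrite mulr_ge0 ?subr_ge0 // (le_trans _ Sm) // lerD2r ler_wpM2l ?uS.
  lra.
move=> t; apply: le_trans (uS t) _.
have [Sa|aS] := leP S a; first by rewrite le_max Sa.
rewrite le_max ler_pdivlMr ?subr_gt0 // orbC.
move: S_le; rewrite le_max leNgt aS /=; lra.
Qed.

Section ZeroHistories.
Variables (R : realType) (d x0 : R) (p : rule R).
Hypotheses (d01 : 0 < d < 1) (x0_gt0 : 0 < x0) (p_rule : is_rule p).
Local Notation P t := (p (zero_hist x0 t)).
Local Notation U z s t := (Upay d p (binary_env z s) (zero_hist x0 t)).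

Let d01' := open_unit_le d01.

Lemma Upay_zero_hist_le z s t : 0 <= z -> 0 <= s <= 1 ->
  U z s t <= P t * x0 + (1 - P t) * (d * U z s t.+1 + d * s * Num.max x0 z).
Proof.
move=> z0 s01; have bh := best_zero_hist t (ltW x0_gt0).
have bh0 : 0 <= best (zero_hist x0 t) by rewrite bh ltW.
rewrite Upay_binaryE // bh -zero_histS; set V := U z s t.+1.
have V0 : 0 <= V by apply: Upay_ge0; rewrite // zero_histS best_hext_ge0.
have Vz : Upay d p (binary_env z s) (hext (zero_hist x0 t) z) <= Num.max x0 z.
  apply: Upay_le => //; first by rewrite le_max lexx orbT.
  by rewrite best_hext bh le_max lexx (ltW x0_gt0).
have /andP [P0 P1] := p_rule (zero_hist x0 t); have /andP [s0 s1] := s01.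
have /andP [d0 d1] := d01'.
set W := Upay _ _ _ (hext _ z) in Vz *; set m := Num.max x0 z in Vz *.
have C : (1 - s) * V + s * W <= V + s * m.
  have : s * W <= s * m by rewrite ler_wpM2l.
  have : 0 <= s * V by rewrite mulr_ge0.
  lra.
have dC : d * ((1 - s) * V + s * W) <= d * V + d * s * m.
  by rewrite -mulrA -mulrDr ler_wpM2l.
rewrite -mulrA lerD2l ler_wpM2l // subr_ge0 //.
Qed.

Lemma zero_hist_payoff_le z s t : x0 < z -> 0 < s <= 1 ->
  U 0 0 t / x0 + U z s t / wait_value d s z <=
    Num.max (1 + x0 / wait_value d s z) ((1 - d + d * s) / (1 - d)).
Proof.
move=> x0z /andP [s0 s1]; set G := wait_value d s z; have /andP [d0 d1] := d01.
have z0 : 0 < z := lt_trans x0_gt0 x0z.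
have c0 : 0 < 1 - d + d * s by nra.
have G0 : 0 < G by rewrite /G /wait_value !mulr_gt0 ?invr_gt0.
have s01 : 0 <= s <= 1 by rewrite ltW.
have s01_0 : 0 <= (0 : R) <= 1 by rewrite lexx ler01.
move: t; apply: (bounded_subsolution_le (P := fun t => P t)) => [|t|| t].
- by rewrite ltW.
- exact: p_rule.
- have bh t := best_zero_hist t (ltW x0_gt0).
  exists (1 + z / G) => t; apply: lerD.
    rewrite ler_pdivrMr // mul1r.
    by apply: (Upay_le p_rule s01_0 d01'); rewrite ?bh ?lexx // ltW.
  rewrite ler_pM2r ?invr_gt0 //.
  by apply: (Upay_le p_rule s01 d01'); rewrite ?bh ?lexx ?ltW.
have B_le : U 0 0 t / x0 <= P t + (1 - P t) * (d * (U 0 0 t.+1 / x0)).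
  rewrite ler_pdivrMr //; apply: le_trans (Upay_zero_hist_le t (lexx 0) s01_0) _.
  rewrite mulr0 mul0r addr0 le_eqVlt; apply/predU1P; left.
  by field; rewrite gt_eqF.
have D_le : U z s t / G <= P t * (x0 / G) + (1 - P t) * (d * (U z s t.+1 / G) + (1 - d + d * s)).
  rewrite ler_pdivrMr //; apply: le_trans (Upay_zero_hist_le t (ltW z0) s01) _.
  rewrite (max_idPr (ltW x0z)) le_eqVlt; apply/predU1P; left.
  by rewrite /G /wait_value; field; rewrite !gt_eqF.
rewrite /=; lra.
Qed.

End ZeroHistories.

Section PerformanceRatio.
Variables (R : realType) (d : R) (X : set R) (x0 : R).
Hypotheses (d01 : 0 < d < 1) (X_ge0 : forall x, X x -> 0 <= x) (x0_gt0 : 0 < x0).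
Implicit Types (h : history R) (mu : prior R) (p : rule R).

Let d01' := open_unit_le d01.

Lemma in_hist_best_gt0 h : in_hist X x0 h -> 0 < best h.
Proof. by case=> h1 _; rewrite (lt_le_trans _ (best_ge_head h)) ?h1. Qed.

Lemma perf_ratio_le p h mu : is_rule p -> in_hist X x0 h -> prior_on (BX X) h mu ->
  perf_ratio d X x0 (BX X) p <= Uprior d p mu h / Vprior d mu h.
Proof.
move=> p_rule hX mu_on; apply: ge_inf; last by exists (h, mu).
exists 0 => _ [[h' mu'] [/in_hist_best_gt0 bh' mu'_on] <-].
by rewrite divr_ge0 ?(Uprior_BX_ge0 d01 X_ge0 bh' mu'_on p_rule) ?ltW ?(Vprior_gt0 d01 X_ge0 bh' mu'_on).
Qed.

Lemma perf_ratio_qbar : X 0 -> perf_ratio d X x0 (BX X) (qbar d) = 2^-1.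
Proof.
move=> X0; set h0 : history R := (x0, [::]); pose mu0 : prior R := [:: (1, binary_env 0 0)].
have s01 : 0 <= (0 : R) <= 1 by rewrite lexx ler01.
have lik1 : lik (binary_env 0 0) h0 = 1 by rewrite /lik big_nil.
have h0X : in_hist X x0 h0 by split.
have mu0_on : prior_on (BX X) h0 mu0 by apply: prior_on_single; rewrite ?lik1.
have U_qbar : Uprior d (qbar d) mu0 h0 = x0 / 2.
  by rewrite Uprior_single ?lik1 ?oner_eq0 // Upay_qbar_point0 // ltW.
have V_x0 : Vprior d mu0 h0 = x0.
  apply/eqP; rewrite eq_le (best_le_Vprior d01 X_ge0 (in_hist_best_gt0 h0X) mu0_on) andbT.
  apply: ge_sup => [|_ [p p_rule <-]]; first by exists (x0 / 2), (qbar d); [exact: qbar_rule|].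
  rewrite Uprior_single ?lik1 ?oner_eq0 //; apply: Upay_le => //; first exact: ltW.
  by rewrite /= lexx andbT ltW.
apply/eqP; rewrite eq_le; apply/andP; split.
  rewrite (le_trans (perf_ratio_le (qbar_rule d01) h0X mu0_on)) // U_qbar V_x0.
  by rewrite mulrC mulKf ?gt_eqF.
apply: lb_le_inf; first by exists (x0 / 2 / x0), (h0, mu0); rewrite //= U_qbar V_x0.
move=> _ [[h mu] [/in_hist_best_gt0 bh mu_on] <-] /=.
rewrite ler_pdivlMr ?(Vprior_gt0 d01 X_ge0 bh) //.
by have := Vprior_le_2Uprior_qbar d01 X_ge0 bh mu_on; lra.
Qed.

Lemma perf_ratio_mul_le_Upay p p' z s h : is_rule p -> is_rule p' -> X z -> 0 <= s <= 1 ->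
    in_hist X x0 h -> 0 < lik (binary_env z s) h ->
  perf_ratio d X x0 (BX X) p * Upay d p' (binary_env z s) h <= Upay d p (binary_env z s) h.
Proof.
move=> p_rule p'_rule Xz s01 hX lik_gt0.
have bh := in_hist_best_gt0 hX; have z0 := X_ge0 Xz.
have mu_on := prior_on_single Xz s01 lik_gt0.
have U_ge0 q : is_rule q -> 0 <= Upay d q (binary_env z s) h.
  by move=> q_rule; apply: Upay_ge0; rewrite // ltW.
have [r_le0|r_gt0] := leP (perf_ratio d X x0 (BX X) p) 0.
  by rewrite (le_trans _ (U_ge0 _ p_rule)) // mulr_le0_ge0 ?U_ge0.
have V_gt0 := Vprior_gt0 d01 X_ge0 bh mu_on.
have U'_le_V := Uprior_le_Vprior d01 X_ge0 bh mu_on p'_rule.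
have := perf_ratio_le p_rule hX mu_on.
rewrite !Uprior_single ?gt_eqF // in U'_le_V * => /=; rewrite ler_pdivlMr // => rV.
by rewrite (le_trans _ rV) // ler_wpM2l // ltW.
Qed.

Lemma two_perf_ratio_le p z s : is_rule p -> X 0 -> X z -> x0 < z -> 0 < s <= 1 ->
  2 * perf_ratio d X x0 (BX X) p <=
    Num.max (1 + x0 / wait_value d s z) ((1 - d + d * s) / (1 - d)).
Proof.
move=> p_rule X0 Xz x0z s01'; have /andP [s0 s1] := s01'; set G := wait_value d s z.
have /andP [d0 d1] := d01.
have z0 : 0 < z := lt_trans x0_gt0 x0z.
have s01 : 0 <= s <= 1 by rewrite ltW.
have c0 : 0 < 1 - d + d * s by nra.
have G0 : 0 < G by rewrite /G divr_gt0 // !mulr_gt0.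
have h0X : in_hist X x0 (zero_hist x0 0) by split.
have lik1 z' s' : 0 < lik (binary_env z' s') (zero_hist x0 0) by rewrite /lik big_nil.
set r := perf_ratio _ _ _ _ _.
have B_ge : r * x0 <= Upay d p (binary_env 0 0) (zero_hist x0 0).
  have stop_rule : is_rule (stationary (1 : R)) by apply: stationary_rule; rewrite ler01 lexx.
  have s01_0 : 0 <= (0 : R) <= 1 by rewrite lexx ler01.
  have := perf_ratio_mul_le_Upay p_rule stop_rule X0 s01_0 h0X (lik1 0 0).
  by rewrite (Upay_stop stop_rule s01_0 d01' (lexx 0)) //=; exact: ltW.
have D_ge : r * G <= Upay d p (binary_env z s) (zero_hist x0 0).
  have q01 : 0 <= (0 : R) <= 1 by rewrite lexx ler01.
  have L_G : Upay d (stationary 0) (binary_env z s) (zero_hist x0 0) = G.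
    by rewrite Upay_wait //= ltW // ltW.
  by rewrite -L_G (perf_ratio_mul_le_Upay p_rule (stationary_rule q01) Xz s01 h0X (lik1 z s)).
have := zero_hist_payoff_le d01 x0_gt0 p_rule 0 x0z s01'; rewrite -/G.
by rewrite -ler_pdivlMr // in B_ge; rewrite -ler_pdivlMr // in D_ge; lra.
Qed.

End PerformanceRatio.

Lemma perf_ratio_le_half (R : realType) (d : R) (X : set R) (x0 : R) (p : rule R) :
    0 < d < 1 -> (forall x, X x -> 0 <= x) -> X 0 -> 0 < x0 ->
    (forall M, exists2 x, X x & M < x) -> is_rule p ->
  perf_ratio d X x0 (BX X) p <= 2^-1.
Proof.
move=> d01 X_ge0 X0 x0_gt0 X_unbounded p_rule; have /andP [d0 d1] := d01.
set r := perf_ratio _ _ _ _ _; rewrite leNgt; apply/negP => r_gt.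
(* s makes d s / (1 - d) < eps and z makes x0 / wait_value d s z < eps. *)
set eps := 2 * r - 1; have eps0 : 0 < eps by rewrite /eps; lra.
set s := eps * (1 - d) / (1 + eps).
have s_def : s * (1 + eps) = eps * (1 - d) by rewrite /s divfK // gt_eqF //; lra.
have s0 : 0 < s by rewrite /s !mulr_gt0 ?invr_gt0 //; lra.
have s01 : 0 < s <= 1 by rewrite s0 /=; nra.
set c := 1 - d + d * s; have c0 : 0 < c by rewrite /c; nra.
have dse : 0 < d * s * eps by do 2 apply: mulr_gt0 => //.
have [z Xz z_gt] := X_unbounded (x0 + x0 * c / (d * s * eps)).
have x0z : x0 < z.
  have : 0 < x0 * c / (d * s * eps) by apply: divr_gt0 => //; apply: mulr_gt0.
  lra.
have := two_perf_ratio_le d01 X_ge0 x0_gt0 p_rule X0 Xz x0z s01.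
rewrite -/r -/c; set G := wait_value d s z.
have G0 : 0 < G.
  by apply: divr_gt0 => //; apply: mulr_gt0; [apply: mulr_gt0 | lra].
have c_lt : c / (1 - d) < 2 * r.
  rewrite ltr_pdivrMr ?subr_gt0 // (_ : 2 * r = 1 + eps); last by rewrite /eps; ring.
  have : d * s < s by nra.
  have : 0 < s * eps by apply: mulr_gt0.
  rewrite /c; lra.
have x0G_lt : 1 + x0 / G < 2 * r.
  suff : x0 / G < eps by rewrite /eps; lra.
  rewrite ltr_pdivrMr // /G /wait_value -/c mulrA ltr_pdivlMr //.
  have : x0 * c / (d * s * eps) < z by lra.
  by rewrite ltr_pdivrMr //; lra.
have : Num.max (1 + x0 / G) (c / (1 - d)) < 2 * r by rewrite gt_max x0G_lt c_lt.
lra.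
Qed.

Theorem theorem1 (R : realType) (delta : R) (X : set R) (x0 : R) :
  0 < delta < 1 ->
  measurable X ->
  (forall x, X x -> 0 <= x) ->
  X 0 ->
  0 < x0 ->
  perf_ratio delta X x0 (BX X) (qbar delta) = 2^-1 /\
  ((forall M : R, exists2 x, X x & M < x) ->
   dyn_robust delta X x0 (BX X) (qbar delta)).
Proof.
move=> d01 _ X_ge0 X0 x0_gt0.
have qbar_half := perf_ratio_qbar d01 X_ge0 x0_gt0 X0.
split=> // X_unbounded; rewrite /dyn_robust /robust_ratio qbar_half.
have qbar_in : [set perf_ratio delta X x0 (BX X) p | p in @is_rule R] 2^-1.
  by exists (qbar delta); [exact: qbar_rule | exact: qbar_half].
have half_ub : ubound [set perf_ratio delta X x0 (BX X) p | p in @is_rule R] 2^-1.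
  by move=> _ [p p_rule <-]; exact: perf_ratio_le_half.
apply/eqP; rewrite eq_le ge_sup ?ub_le_sup //; [by exists 2^-1 | by exists 2^-1].
Qed.
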